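(* There exists a $(\mathbb{Z}_{40},[1,3,9,27],20)$ Hadamard partitioned difference family in the cyclic group $\mathbb{Z}_{40}$.
   Context: For $B\subseteq\mathbb{Z}_{40}$, $\Delta B$ is the multiset $\{x-y: x,y\in B, x\neq y\}$; for $\mathcal{F}=\{B_1,\dots,B_t\}$, $\Delta\mathcal{F}$ is the multiset union of the $\Delta B_i$. $\mathcal{F}$ is a $(G,[k_1,\dots,k_t],\lambda)$ partitioned difference family if the $B_i$ partition $G$, $|B_i|=k_i$, and $\Delta\mathcal{F}$ contains every non-zero element of $G$ exactly $\lambda$ times; it is Hadamard if $|G|=2\lambda$. *)

From mathcomp Require Import all_boot all_order all_algebra.
Set Implicit Arguments. Unset Strict Implicit. Unset Printing Implicit Defensive.
Import GRing.Theory.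
Local Open Scope ring_scope.

Definition delta_mult (G : finZmodType) (B : {set G}) (g : G) : nat :=
  #|[set p : G * G | [&& p.1 \in B, p.2 \in B, p.1 != p.2 & p.1 - p.2 == g]]|.

Definition deltaF_mult (G : finZmodType) (F : seq {set G}) (g : G) : nat :=
  (\sum_(B <- F) delta_mult B g)%N.

Definition is_PDF (G : finZmodType) (F : seq {set G}) (ks : seq nat) (lambda : nat) : Prop :=
  [/\ size F = size ks,
      (forall i j, (i < size F)%N -> (j < size F)%N -> i <> j ->
          [disjoint nth set0 F i & nth set0 F j]),
      (forall x : G, exists2 B, B \in F & x \in B),
      (forall i, (i < size F)%N -> #|nth set0 F i| = nth 0%N ks i)
    & (forall g : G, g != 0 -> deltaF_mult F g = lambda)].

Definition is_Hadamard_PDF (G : finZmodType) (F : seq {set G}) (ks : seq nat) (lambda : nat) : Prop :=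
  is_PDF F ks lambda /\ #|G| = (2 * lambda)%N.

(* The four blocks are written down explicitly as lists of residues mod 40.
   Each condition of a partitioned difference family (block sizes, partition,
   and every nonzero difference occurring exactly 20 times) becomes a finite
   check on these lists, which is then decided by computation. *)

From mathcomp Require Import all_boot all_order all_algebra.
Import GRing.Theory.

Set Implicit Arguments.
Unset Strict Implicit.
Unset Printing Implicit Defensive.

Lemma delta_multE (G : finZmodType) (B : {set G}) (g : G) :
  g != 0%R -> delta_mult B g = #|[set x in B | (x - g)%R \in B]|.
Proof.
move=> g0; rewrite /delta_mult.
have -> : [set p : G * G | [&& p.1 \in B, p.2 \in B, p.1 != p.2 & (p.1 - p.2)%R == g]]
    = (fun x => (x, x - g)%R) @: [set x in B | (x - g)%R \in B].
  apply/setP => -[x y]; rewrite inE /=; apply/and4P/imsetP.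
  - by case=> xB yB _ /eqP <-; exists x; rewrite ?inE subKr ?xB.
  - case=> z; rewrite inE => /andP[zB zgB] [-> ->]; split; rewrite ?subKr //.
    by apply: contra g0 => /eqP zE; rewrite -(subKr z g) -zE subrr.
by rewrite card_imset // => x y [].
Qed.

Lemma count_le1_nth_eq (T : Type) (x0 : T) (a : pred T) (s : seq T) (i j : nat) :
  (count a s <= 1)%N -> (i < size s)%N -> (j < size s)%N ->
  a (nth x0 s i) -> a (nth x0 s j) -> i = j.
Proof.
elim: s i j => [|y s IHs] [|i] [|j] //= a_le1 ilt jlt ai aj.
- have : has a s by apply/(has_nthP x0); exists j.
  by rewrite has_count; move: a_le1; rewrite ai /= ltnS leqNgt => /negbTE ->.
- have : has a s by apply/(has_nthP x0); exists i.
  by rewrite has_count; move: a_le1; rewrite aj /= ltnS leqNgt => /negbTE ->.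
- congr _.+1; apply: IHs => //.
  exact: leq_trans (leq_addl _ _) a_le1.
Qed.

Lemma disjoint_nth_count_le1 (T : finType) (F : seq {set T}) (i j : nat) :
  (forall x, count (fun B : {set T} => x \in B) F <= 1)%N ->
  (i < size F)%N -> (j < size F)%N -> i <> j ->
  [disjoint nth set0 F i & nth set0 F j].
Proof.
move=> F_le1 ilt jlt ij; rewrite -setI_eq0; apply/eqP/setP => x.
rewrite !inE; apply/negbTE/negP => /andP[xi xj].
exact: ij (count_le1_nth_eq (F_le1 x) ilt jlt xi xj).
Qed.

Lemma card_set_ord (m : nat) (P : pred nat) :
  #|[set x : 'I_m | P x]| = count P (iota 0 m).
Proof.
rewrite cardE /enum_mem size_filter -enumT -val_enum_ord count_map.
by apply: eq_count => x; rewrite /= inE.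
Qed.

Lemma val_Zp_sub (n : nat) (x y : 'I_n.+1) : val (x - y)%R = (x + (n.+1 - y)) %% n.+1.
Proof. by rewrite /= modnDmr. Qed.

Section ResidueLists.

Variable n : nat.

Definition residue_set (s : seq nat) : {set 'I_n.+1} := [set x | val x \in s].

(* [(x + (n.+1 - k)) %% n.+1] is [x - k] mod [n.+1], for [k <= n.+1]. *)
Definition diff_count (s : seq nat) (k : nat) : nat :=
  count (fun x => (x \in s) && ((x + (n.+1 - k)) %% n.+1 \in s)) (iota 0 n.+1).

Lemma delta_mult_residue_set (s : seq nat) (g : 'I_n.+1) :
  g != 0%R -> delta_mult (residue_set s) g = diff_count s g.
Proof.
move=> g0; rewrite delta_multE // /diff_count -card_set_ord.
by apply: eq_card => x; rewrite !inE val_Zp_sub.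
Qed.

Definition pdf_check (ss : seq (seq nat)) (ks : seq nat) (lambda : nat) : bool :=
  [&& [seq count (fun x => x \in s) (iota 0 n.+1) | s <- ss] == ks,
      all (fun x => count (fun s => x \in s) ss == 1) (iota 0 n.+1)
    & all (fun k => sumn [seq diff_count s k | s <- ss] == lambda) (iota 1 n)].

Lemma pdf_check_is_PDF (ss : seq (seq nat)) (ks : seq nat) (lambda : nat) :
  pdf_check ss ks lambda -> is_PDF (map residue_set ss) ks lambda.
Proof.
case/and3P => /eqP sizes /allP part /allP diffs.
have mem_once x : count (fun B : {set _} => x \in B) (map residue_set ss) = 1%N.
  rewrite count_map -(eqP (part x _)) ?mem_iota ?ltn_ord //.
  by apply: eq_count => s; rewrite /= inE.
split.
- by rewrite -sizes !size_map.
- by move=> i j ilt jlt; apply: disjoint_nth_count_le1 => // x; rewrite mem_once.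
- by move=> x; apply/hasP; rewrite has_count mem_once.
- move=> i; rewrite size_map => ilt.
  by rewrite -sizes !(nth_map [::]) // card_set_ord.
- move=> g g0; have g_pos : (0 < g)%N.
    by rewrite lt0n; apply: contra g0 => /eqP g_0; apply/eqP/val_inj.
  have g_in : val g \in iota 1 n by rewrite mem_iota g_pos add1n ltn_ord.
  rewrite /deltaF_mult big_map -(eqP (diffs _ g_in)) sumnE big_map.
  by apply: eq_bigr => s _; apply: delta_mult_residue_set.
Qed.

End ResidueLists.

Definition hadamard_blocks_Z40 : seq (seq nat) :=
  [:: [:: 4];
      [:: 14; 24; 34];
      [:: 2; 3; 7; 20; 26; 28; 29; 31; 35];
      [:: 0; 1; 5; 6; 8; 9; 10; 11; 12; 13; 15; 16; 17; 18; 19; 21; 22; 23;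
          25; 27; 30; 32; 33; 36; 37; 38; 39]].

Theorem mainTheorem12 :
  exists F : seq {set 'Z_40}, is_Hadamard_PDF F [:: 1%N; 3%N; 9%N; 27%N] 20.
Proof.
(* ['Z_40] is ['I_40], i.e. ['I_39.+1]. *)
exists (map (residue_set 39) hadamard_blocks_Z40); split; last by rewrite card_ord.
by apply: pdf_check_is_PDF; vm_compute.
Qed.
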